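(* Let $R\subseteq\mathbb N$ be sparse, $n\in\mathbb N^+$, and $\mathbf A=(A_1,\dots,A_n)$ an $n$-tuple of operators on $R$ with $A_i\neq_R0$ for all $i$. Then there is $\Delta_0$ such that for every $\Delta\ge\Delta_0$ and all distinct $z,w\in R^n_\Delta$, letting $e=\min\{i: z_i\ne w_i\}$, we have $\mathbf A\cdot z>\mathbf A\cdot w$ if and only if ($z_e>w_e$ and $A_e>_R0$) or ($z_e<w_e$ and $A_e<_R0$). In particular, $z\mapsto\mathbf A\cdot z$ is injective on $R^n_\Delta$.
   Context: Let $R\subseteq\mathbb N$ be infinite, enumerated increasingly as $(r_n)_{n\in\mathbb N}$; $\sigma:R\to R$ is the successor map $\sigma(r_n)=r_{n+1}$ and $\sigma^k$ its $k$-fold iterate ($\sigma^0=\mathrm{id}$). An operator on $R$ is a function $R\to\mathbb Z$, $z\mapsto a_m\sigma^m(z)+\dots+a_0\sigma^0(z)$ with $a_i\in\mathbb Z$. For an operator $A$: $A=_R0$ if $Az=0$ for all $z\in R$; $A>_R0$ (resp. $A<_R0$) if $Az>0$ (resp. $Az<0$) for all but finitely many $z\in R$. $R$ is sparse if every operator $A$ satisfies (S1) $A=_R0$ or $A>_R0$ or $A<_R0$; and (S2) if $A>_R0$ then there is $\Delta\in\mathbb N$ with $A(\sigma^\Delta z)>z$ for all $z\in R$. For an $n$-tuple of operators $\mathbf A$ and $z\in R^n$, $\mathbf A\cdot z=A_1z_1+\dots+A_nz_n$. For $\tilde R\subseteq R$ and $\Delta\in\mathbb N$, $\tilde R^n_\Delta=\{(z_1,\dots,z_n)\in\tilde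 R^n: z_i\ge\sigma^\Delta z_{i+1}\text{ for }1\le i\le n\}$ where $z_{n+1}:=\min\tilde R$. *)

From mathcomp Require Import all_boot all_order all_algebra.
Set Implicit Arguments. Unset Strict Implicit. Unset Printing Implicit Defensive.
Import Order.TTheory GRing.Theory Num.Theory.
Local Open Scope ring_scope.

(* A set R ⊆ ℕ (infinite) is represented by its increasing enumeration
   r : nat -> nat, i.e. R = { r k | k }, r_k = r k.  An element z = r k of R
   is handled through its index k; then σ^j z = r (k + j).
   An operator a_m σ^m + ... + a_0 σ^0 is the coefficient list
   [:: a_0; ...; a_m] : seq int. *)

Definition increasing (r : nat -> nat) : Prop := forall k, (r k < r k.+1)%N.

Definition apply_op (r : nat -> nat) (a : seq int) (k : nat) : int :=
  \sum_(i < size a) a`_i * ((r (k + i)%N)%:Z).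

Definition op_eq0 r a : Prop := forall k, apply_op r a k = 0.
Definition op_pos r a : Prop := exists N, forall k, (N <= k)%N -> 0 < apply_op r a k.
Definition op_neg r a : Prop := exists N, forall k, (N <= k)%N -> apply_op r a k < 0.

Definition sparse (r : nat -> nat) : Prop :=
  forall a : seq int,
    (op_eq0 r a \/ op_pos r a \/ op_neg r a) /\
    (op_pos r a -> exists D : nat, forall k, ((r k)%:Z < apply_op r a (k + D)%N)).

(* index of z_{i} for i : nat, with z_{n+1} := min R = r 0 (index 0) *)
Definition ext_idx n (z : 'I_n -> nat) (k : nat) : nat :=
  if insub k is Some i then z i else 0%N.

(* z ∈ R^n_Δ (with R~ = R), z given by the indices of its entries:
   z_i >= σ^Δ z_{i+1} for all 1 <= i <= n *)
Definition inRnD (r : nat -> nat) n (D : nat) (z : 'I_n -> nat) : Prop :=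
  forall i : 'I_n, (r (ext_idx z i.+1 + D) <= r (z i))%N.

Definition dotA (r : nat -> nat) n (A : 'I_n -> seq int) (z : 'I_n -> nat) : int :=
  \sum_(i < n) apply_op r (A i) (z i).

From mathcomp Require Import all_boot all_order all_algebra.
From mathcomp Require Import zify.

Set Implicit Arguments.
Unset Strict Implicit.
Unset Printing Implicit Defensive.
Import Order.TTheory GRing.Theory Num.Theory.
Local Open Scope ring_scope.

(* If [A >_R 0], then [σA - A >_R 0] as well, since otherwise [A] would be
   eventually bounded, contradicting (S2); iterating (S2) then shows that a
   shift of [σA - A] exceeds any fixed multiple of the identity.  On [R^n_Δ]
   all coordinates after the first difference [e] lie at least [Δ] steps of [R]
   below [z_e], so the jump [A_e z_e - A_e w_e >= A_e z_e - A_e (σ^-1 z_e)]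
   outweighs the remaining terms, each bounded by a constant times a fixed
   shift of its argument. *)

Section Operators.
Variable r : nat -> nat.

Lemma apply_opE a k N : (size a <= N)%N ->
  apply_op r a k = \sum_(0 <= i < N) a`_i * (r (k + i))%:Z.
Proof.
move=> leaN; rewrite /apply_op -(big_mkord xpredT (fun i => a`_i * (r (k + i))%:Z)).
rewrite (big_cat_nat (leq0n _) leaN) /= [X in _ = _ + X]big1_seq ?addr0 //.
by move=> i /andP[_]; rewrite mem_index_iota => /andP[/(nth_default 0) -> _]; rewrite mul0r.
Qed.

Lemma apply_op_cons0 a k : apply_op r (0 :: a) k = apply_op r a k.+1.
Proof.
rewrite /apply_op big_ord_recl /= mul0r add0r.
by apply: eq_bigr => i _; rewrite addnS.
Qed.

Lemma apply_op_ncons0 t a k : apply_op r (ncons t 0 a) k = apply_op r a (k + t).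
Proof.
by elim: t k => [|t IHt] k; rewrite ?addn0 //= apply_op_cons0 IHt addSnnS.
Qed.

Definition sub_op (a b : seq int) : seq int :=
  mkseq (fun i => a`_i - b`_i) (maxn (size a) (size b)).

Lemma apply_op_sub a b k : apply_op r (sub_op a b) k = apply_op r a k - apply_op r b k.
Proof.
rewrite (apply_opE _ (leqnn _)) size_mkseq (apply_opE _ (leq_maxl _ (size b))).
rewrite (apply_opE _ (leq_maxr (size a) _)) -sumrB.
by apply: eq_big_nat => i /andP[_ ltiN]; rewrite nth_mkseq // mulrBl.
Qed.

Lemma apply_op_opp a k : apply_op r (sub_op [::] a) k = - apply_op r a k.
Proof. by rewrite apply_op_sub /apply_op big_ord0 sub0r. Qed.

Lemma apply_op_cst (c : int) k : apply_op r [:: c] k = c * (r k)%:Z.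
Proof. by rewrite /apply_op big_ord1 addn0. Qed.

Definition diff_op (a : seq int) : seq int := sub_op (0 :: a) a.

Lemma apply_diff_op a k :
  apply_op r (diff_op a) k = apply_op r a k.+1 - apply_op r a k.
Proof. by rewrite apply_op_sub apply_op_cons0. Qed.

Lemma dotA_opp n (A : 'I_n -> seq int) z :
  dotA r (fun i => sub_op [::] (A i)) z = - dotA r A z.
Proof. by rewrite /dotA -sumrN; apply: eq_bigr => i _; rewrite apply_op_opp. Qed.

Lemma op_pos_not_neg a : op_pos r a -> ~ op_neg r a.
Proof.
move=> [N aN] [N' aN'].
by have := aN (maxn N N') (leq_maxl _ _); rewrite lt_gtF // aN' // leq_maxr.
Qed.

Lemma op_neg_opp a : op_neg r a -> op_pos r (sub_op [::] a).
Proof. by move=> [N aN]; exists N => k le_Nk; rewrite apply_op_opp oppr_gt0 aN. Qed.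

End Operators.

Lemma ext_idx_ord n (z : 'I_n -> nat) (i : 'I_n) : ext_idx z i = z i.
Proof. by rewrite /ext_idx valK. Qed.

Lemma ext_idx_out n (z : 'I_n -> nat) k : (n <= k)%N -> ext_idx z k = 0%N.
Proof. by move=> le_nk; rewrite /ext_idx insubN // -leqNgt. Qed.

Section Increasing.
Variable r : nat -> nat.
Hypothesis r_incr : increasing r.

Lemma ltn_r_homo : {homo r : i j / (i < j)%N}.
Proof. exact: homo_ltn ltn_trans r_incr. Qed.

Lemma leq_r_mono : {mono r : i j / (i <= j)%N}.
Proof. exact: leq_mono ltn_r_homo. Qed.

Lemma ltn_r_mono : {mono r : i j / (i < j)%N}.
Proof. exact: leqW_mono leq_r_mono. Qed.

Lemma leq_index_r k : (k <= r k)%N.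
Proof. by elim: k => // k IHk; apply: leq_ltn_trans IHk (r_incr k). Qed.

Definition op_norm (a : seq int) : nat := (\sum_(i < size a) absz (nth 0%R a i))%N.

Lemma apply_op_norm_le a k :
  `|apply_op r a k| <= (op_norm a)%:Z * (r (k + size a))%:Z.
Proof.
rewrite /op_norm (big_morph Posz PoszD (erefl 0%:Z)) mulr_suml.
apply: le_trans (ler_norm_sum _ _ _) _.
apply: ler_sum => i _; rewrite normrM abszE ler_wpM2l // lez_nat leq_r_mono.
by rewrite leq_add2l ltnW.
Qed.

Lemma op_family_bound n (A : 'I_n -> seq int) : exists K M : nat,
  forall i x, `|apply_op r (A i) x| <= K%:Z * (r (x + M))%:Z.
Proof.
exists (\sum_(i < n) op_norm (A i))%N, (\sum_(i < n) size (A i))%N => i x.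
apply: le_trans (apply_op_norm_le (A i) x) _.
rewrite ler_pM // lez_nat ?leq_r_mono ?leq_add2l //.
  by rewrite (bigD1 i) //= leq_addr.
by rewrite (bigD1 i) //= leq_addr.
Qed.

Lemma inRnD_ext_idx n D (z : 'I_n -> nat) : inRnD r D z ->
  forall i j, (i < j <= n)%N -> (ext_idx z j + D <= ext_idx z i)%N.
Proof.
move=> zD i; elim=> // j IHj /andP[lt_ij lt_jn].
have step : (ext_idx z j.+1 + D <= ext_idx z j)%N.
  by have := zD (Ordinal lt_jn); rewrite leq_r_mono -(ext_idx_ord z (Ordinal lt_jn)).
rewrite ltnS leq_eqVlt in lt_ij; case/predU1P: lt_ij => [-> // | lt_ij].
by have := IHj; rewrite lt_ij ltnW //=; lia.
Qed.

Lemma inRnD_geq n D (z : 'I_n -> nat) : inRnD r D z -> forall i, (D <= z i)%N.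
Proof.
move=> zD i; have := inRnD_ext_idx zD (i := i) (j := n).
by rewrite ext_idx_out // ext_idx_ord ltn_ord leqnn => /(_ isT).
Qed.

Lemma inRnD_lt n D (z : 'I_n -> nat) : inRnD r D z ->
  forall i j : 'I_n, (i < j)%N -> (z j + D <= z i)%N.
Proof.
move=> zD i j lt_ij; have := inRnD_ext_idx zD (i := i) (j := j).
by rewrite !ext_idx_ord lt_ij ltnW //= => /(_ isT).
Qed.

End Increasing.

Section Sparse.
Variable r : nat -> nat.
Hypotheses (r_incr : increasing r) (r_sparse : sparse r).

Lemma op_pos_or_neg a : ~ op_eq0 r a -> op_pos r a \/ op_neg r a.
Proof. by case: (r_sparse a) => [[a0 | a_sign] _]. Qed.

Lemma op_pos_unbounded a : op_pos r a ->
  forall N c, exists2 k, (N <= k)%N & c < apply_op r a k.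
Proof.
move=> a_pos N c; have [_ /(_ a_pos) [D aD]] := r_sparse a.
exists (N + `|c| + D)%N; first by rewrite -addnA leq_addr.
apply: le_lt_trans (aD _); have := leq_index_r r_incr (N + `|c|); lia.
Qed.

(* If the differences were eventually nonpositive, [a] would be bounded. *)
Lemma op_pos_diff a : op_pos r a -> op_pos r (diff_op a).
Proof.
move=> a_pos; have [[d0 | [// | [N dN]]] _] := r_sparse (diff_op a); exfalso.
- have [k _] := op_pos_unbounded a_pos 0 (apply_op r a 0).
  elim: k => [|k]; first by rewrite ltxx.
  by have := d0 k; rewrite apply_diff_op; lia.
- have [k le_Nk] := op_pos_unbounded a_pos N (apply_op r a N).
  rewrite -(subnK le_Nk); elim: (k - N)%N => [|d]; first by rewrite ltxx.
  by have := dN (d + N)%N (leq_addl _ _); rewrite apply_diff_op addSn; lia.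
Qed.

(* Apply (S2) to [σ^t a - K] for the shift [t] obtained for [K]. *)
Lemma op_pos_growth a : op_pos r a ->
  forall K : nat, exists t, forall k, K%:Z * (r k)%:Z < apply_op r a (k + t).
Proof.
move=> a_pos; elim=> [|K [t aKt]].
  have [_ /(_ a_pos) [D aD]] := r_sparse a.
  by exists D => k; rewrite mul0r; apply: le_lt_trans (aD k).
pose b := sub_op (ncons t 0 a) [:: K%:Z].
have bE k : apply_op r b k = apply_op r a (k + t) - K%:Z * (r k)%:Z.
  by rewrite apply_op_sub apply_op_ncons0 apply_op_cst.
have [_ /(_ _) [|D bD]] := r_sparse b.
  by exists 0%N => k _; rewrite bE subr_gt0.
exists (D + t)%N => k; have := bD k; rewrite bE addnA.
have : (r k <= r (k + D))%N by rewrite leq_r_mono // leq_addr.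
by nia.
Qed.

Definition diff_dominates (c : nat) (a : seq int) (T : nat) : Prop :=
  forall x, (T <= x)%N -> c%:Z * (r (x - T))%:Z < apply_op r a x.+1 - apply_op r a x.

Lemma op_pos_diff_dominates a c : op_pos r a -> exists T, diff_dominates c a T.
Proof.
move=> /op_pos_diff /op_pos_growth /(_ c) [T dT]; exists T => x le_Tx.
by have := dT (x - T)%N; rewrite subnK // apply_diff_op.
Qed.

Lemma op_sign_diff_dominates a c : ~ op_eq0 r a -> exists T,
  (op_pos r a -> diff_dominates c a T) /\
  (op_neg r a -> diff_dominates c (sub_op [::] a) T).
Proof.
case/op_pos_or_neg => [a_pos | a_neg].
  have [T a_dom] := op_pos_diff_dominates c a_pos.
  by exists T; split=> // /(op_pos_not_neg a_pos).
have [T a_dom] := op_pos_diff_dominates c (op_neg_opp a_neg).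
by exists T; split=> // /op_pos_not_neg.
Qed.

End Sparse.

Lemma diff_dominates_le r c a T x y : diff_dominates r c a T ->
  (T <= x <= y)%N -> apply_op r a x <= apply_op r a y.
Proof.
move=> a_dom /andP[le_Tx /subnK <-]; elim: (y - x)%N => // d IHd.
apply: le_trans IHd _; rewrite addSn -subr_ge0.
apply: le_trans (ltW (a_dom _ _)); first by rewrite mulr_ge0.
by rewrite (leq_trans le_Tx) // leq_addl.
Qed.

Section FirstDifference.
Variables (r : nat -> nat) (n : nat) (A : 'I_n -> seq int) (K M : nat).
Hypothesis r_incr : increasing r.
Hypothesis A_bound : forall i x, `|apply_op r (A i) x| <= K%:Z * (r (x + M))%:Z.

Lemma dotA_lt_first_diff (e : 'I_n) T D (z w : 'I_n -> nat) :
  diff_dominates r (2 * n * K) (A e) T -> (T + M < D)%N ->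
  inRnD r D z -> inRnD r D w -> (forall i : 'I_n, (i < e)%N -> z i = w i) ->
  (w e < z e)%N -> dotA r A w < dotA r A z.
Proof.
move=> e_dom lt_TMD zD wD zw_e lt_we.
pose x := (z e).-1; pose c := K%:Z * (r (x - T))%:Z.
have le_Dw := inRnD_geq r_incr wD e.
have jump : c *+ (2 * n) < apply_op r (A e) (z e) - apply_op r (A e) (w e).
  have le_wx : apply_op r (A e) (w e) <= apply_op r (A e) x.
    by apply: diff_dominates_le e_dom _; apply/andP; split; lia.
  have cE : ((2 * n * K)%N)%:Z * (r (x - T))%:Z = c *+ (2 * n).
    by rewrite /c -mulrnAl PoszM -natz mulr_natl.
  have := e_dom x; rewrite cE {2}/x prednK; last by lia.
  by move=> /(_ _)/ltr_leD/(_ le_wx); rewrite subrK ltrBrDr; apply; lia.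
have tail (i : 'I_n) : i != e -> `|apply_op r (A i) (z i) - apply_op r (A i) (w i)| <= c *+ 2.
  case: (ltngtP i e) => [lt_ie | lt_ei | /val_inj ->]; last by rewrite eqxx.
  - by rewrite zw_e // subrr normr0 mulrn_wge0 // mulr_ge0.
  have bound y : (y + D <= z e)%N -> `|apply_op r (A i) y| <= c.
    move=> le_yDz; apply: le_trans (A_bound i y) _; rewrite ler_wpM2l // lez_nat.
    by rewrite leq_r_mono //; lia.
  move=> _; apply: le_trans (ler_normB _ _) _; rewrite mulr2n lerD ?bound //.
    exact: (inRnD_lt r_incr zD lt_ei).
  by apply: leq_trans (ltnW lt_we); apply: (inRnD_lt r_incr wD lt_ei).
have tail_sum : `|\sum_(i | i != e) (apply_op r (A i) (z i) - apply_op r (A i) (w i))|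
    <= c *+ (2 * n).
  apply: le_trans (ler_norm_sum _ _ _) _; apply: le_trans (ler_sum _ tail) _.
  have -> : c *+ (2 * n) = \sum_(i < n) c *+ 2 by rewrite sumr_const card_ord mulrnA.
  by rewrite [leRHS](bigD1 e) //= lerDr mulrn_wge0 // mulr_ge0.
rewrite -subr_gt0 /dotA -sumrB (bigD1 e) //=; set S := \sum_(i | i != e) _.
rewrite -(addNr S) ltrD2r.
by apply: le_lt_trans jump; apply: le_trans tail_sum; rewrite -normrN ler_norm.
Qed.
End FirstDifference.

Lemma exists_first_diff n (z w : 'I_n -> nat) i : z i <> w i ->
  exists2 e : 'I_n, z e <> w e & forall j : 'I_n, (j < e)%N -> z j = w j.
Proof.
move=> /eqP zw_i.
case: (@arg_minnP _ i (fun j => z j != w j) (@nat_of_ord n) zw_i) => e /eqP zw_e e_min.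
exists e => // j lt_je; apply/eqP; apply: contraTT lt_je => /e_min.
by rewrite -leqNgt.
Qed.

Section Ordering.
Variables (r : nat -> nat) (n : nat) (A : 'I_n -> seq int) (K M : nat) (T : 'I_n -> nat).
Hypothesis r_incr : increasing r.
Hypothesis A_bound : forall i x, `|apply_op r (A i) x| <= K%:Z * (r (x + M))%:Z.
Hypothesis A_sign : forall i, op_pos r (A i) \/ op_neg r (A i).
Hypothesis A_dom : forall i,
  (op_pos r (A i) -> diff_dominates r (2 * n * K) (A i) (T i)) /\
  (op_neg r (A i) -> diff_dominates r (2 * n * K) (sub_op [::] (A i)) (T i)).

Lemma dotA_lt_first_diff_sign (e : 'I_n) D (z w : 'I_n -> nat) :
  (T e + M < D)%N -> inRnD r D z -> inRnD r D w ->
  (forall i : 'I_n, (i < e)%N -> z i = w i) -> (w e < z e)%N ->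
  (op_pos r (A e) -> dotA r A w < dotA r A z) /\
  (op_neg r (A e) -> dotA r A z < dotA r A w).
Proof.
move=> lt_TMD zD wD zw_e lt_we; split=> [e_pos | e_neg].
  exact: (dotA_lt_first_diff r_incr A_bound ((A_dom e).1 e_pos) lt_TMD zD wD zw_e lt_we).
have opp_bound i x : `|apply_op r (sub_op [::] (A i)) x| <= K%:Z * (r (x + M))%:Z.
  by rewrite apply_op_opp normrN.
rewrite -ltrN2 -!(dotA_opp r A).
exact: (dotA_lt_first_diff r_incr opp_bound ((A_dom e).2 e_neg) lt_TMD zD wD zw_e lt_we).
Qed.

Variable D : nat.
Hypothesis lt_TMD : (\max_i T i + M < D)%N.

Let lt_TMD_at e : (T e + M < D)%N.
Proof. exact: leq_ltn_trans (leq_add (leq_bigmax e) (leqnn M)) lt_TMD. Qed.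

Lemma dotA_lt_iff (z w : 'I_n -> nat) (e : 'I_n) :
  inRnD r D z -> inRnD r D w -> (forall i : 'I_n, (i < e)%N -> z i = w i) ->
  z e <> w e ->
  (dotA r A w < dotA r A z <->
    ((r (w e) < r (z e))%N /\ op_pos r (A e)) \/
    ((r (z e) < r (w e))%N /\ op_neg r (A e))).
Proof.
move=> zD wD zw_e /eqP; rewrite !ltn_r_mono // neq_ltn.
case/orP=> [lt_zw | lt_wz].
  have [pos_lt neg_lt] :=
    dotA_lt_first_diff_sign (lt_TMD_at e) wD zD (fun i lt_ie => esym (zw_e i lt_ie)) lt_zw.
  split=> [lt_dot | [[] | [_ /neg_lt //]]]; last by rewrite ltnNge ltnW.
  right; split=> //; case: (A_sign e) => // /pos_lt; by rewrite lt_gtF.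
have [pos_lt neg_lt] := dotA_lt_first_diff_sign (lt_TMD_at e) zD wD zw_e lt_wz.
split=> [lt_dot | [[_ /pos_lt //] | []]]; last by rewrite ltnNge ltnW.
left; split=> //; case: (A_sign e) => // /neg_lt; by rewrite lt_gtF.
Qed.

Lemma dotA_inj (z w : 'I_n -> nat) : inRnD r D z -> inRnD r D w ->
  dotA r A z = dotA r A w -> forall i, z i = w i.
Proof.
move=> zD wD zw_eq i; case: (eqVneq (z i) (w i)) => // /eqP/exists_first_diff.
move=> [e zw_e zw_lt]; exfalso.
case: (ltngtP (z e) (w e)) => [lt_zw | lt_wz | /zw_e //].
  have [pos_lt neg_lt] := dotA_lt_first_diff_sign (lt_TMD_at e) wD zD
    (fun j lt_je => esym (zw_lt j lt_je)) lt_zw.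
  by case: (A_sign e) => [/pos_lt | /neg_lt]; rewrite zw_eq ltxx.
have [pos_lt neg_lt] := dotA_lt_first_diff_sign (lt_TMD_at e) zD wD zw_lt lt_wz.
by case: (A_sign e) => [/pos_lt | /neg_lt]; rewrite zw_eq ltxx.
Qed.

End Ordering.

Theorem mainTheorem6 (r : nat -> nat) (n : nat) (A : 'I_n -> seq int) :
  increasing r -> sparse r -> (0 < n)%N ->
  (forall i, ~ op_eq0 r (A i)) ->
  exists D0 : nat, forall D : nat, (D0 <= D)%N ->
    (forall z w : 'I_n -> nat, inRnD r D z -> inRnD r D w ->
      forall e : 'I_n, (forall i : 'I_n, (i < e)%N -> z i = w i) -> z e <> w e ->
      (dotA r A w < dotA r A z <->
        ((r (w e) < r (z e))%N /\ op_pos r (A e)) \/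
        ((r (z e) < r (w e))%N /\ op_neg r (A e)))) /\
    (forall z w : 'I_n -> nat, inRnD r D z -> inRnD r D w ->
      dotA r A z = dotA r A w -> forall i, z i = w i).
Proof.
move=> r_incr r_sparse _ A_neq0.
have [K [M A_bound]] := op_family_bound r_incr A.
have A_sign i := op_pos_or_neg r_sparse (A_neq0 i).
have [T A_dom] := fin_all_exists (fun i =>
  op_sign_diff_dominates r_incr r_sparse (2 * n * K) (A_neq0 i)).
exists (\max_i T i + M).+1 => D lt_TMD; split=> z w zD wD.
  by move=> e; apply: (dotA_lt_iff r_incr A_bound A_sign A_dom lt_TMD zD wD).
exact: (dotA_inj r_incr A_bound A_sign A_dom lt_TMD zD wD).
Qed.
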